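(* Let $\mathbb{K}$ be an algebraically closed field of characteristic $0$ and let $f\in\mathbb{K}[X,Y]$ be a polynomial of degree $d\ge1$. Then $$\dim_{\mathbb{K}}\ker\mathcal{R}_d(f)=\dim_{\mathbb{K}}\ker\mathcal{G}_d(f)-1,$$ and for every integer $\nu>d$, $$\dim_{\mathbb{K}}\ker\mathcal{R}_\nu(f)=\dim_{\mathbb{K}}\ker\mathcal{G}_{\nu-1}(f).$$
   Context: $\mathbb{K}[X,Y]_{\le n}$ denotes polynomials of total degree $\le n$. For a positive integer $\nu\ge d$: $\mathcal{G}_\nu(f):\mathbb{K}[X,Y]_{\le\nu-1}^2\to\mathbb{K}[X,Y]_{\le\nu+d-2}$, $(G,H)\mapsto f\partial_YG-G\partial_Yf-f\partial_XH+H\partial_Xf$. Let $E_\nu=\{(G,H)\in\mathbb{K}[X,Y]_{\le\nu-1}^2:\ \deg(XG+YH)\le\nu-1\}$ (dimension $\nu^2-1$), and $\mathcal{R}_\nu(f):E_\nu\to\mathbb{K}[X,Y]_{\le\nu+d-3}$ the map $(G,H)\mapsto f\partial_YG-G\partial_Yf-f\partial_XH+H\partial_Xf$ (its image has degree $\le\nu+d-3$). *)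

From HB Require Import structures.
From mathcomp Require Import all_boot all_order all_algebra.
From mathcomp Require Import mpoly.
Set Implicit Arguments. Unset Strict Implicit. Unset Printing Implicit Defensive.
Import GRing.Theory.
Local Open Scope ring_scope.

(* Bivariate polynomials K[X,Y] are {mpoly K[2]}; X = 'X_0, Y = 'X_1.
   msize p = 1 + total degree of p (and msize 0 = 0), so
   "deg p <= n" is "msize p <= n.+1". *)

Section Defs.
Variable K : fieldType.
Local Notation P := {mpoly K[2]}.

Definition varX : 'I_2 := ord0.
Definition varY : 'I_2 := ord_max.

Definition GRop (f G H : P) : P :=
  f * G^`M(varY) - G * f^`M(varY) - f * H^`M(varX) + H * f^`M(varX).

Definition kerG (nu : nat) (f : P) (G H : P) : Prop :=
  (msize G <= nu)%N /\ (msize H <= nu)%N /\ GRop f G H = 0.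

Definition inE (nu : nat) (G H : P) : Prop :=
  (msize G <= nu)%N /\ (msize H <= nu)%N /\
  (msize ('X_varX * G + 'X_varY * H) <= nu)%N.

Definition kerR (nu : nat) (f : P) (G H : P) : Prop :=
  inE nu G H /\ GRop f G H = 0.

Definition has_dim (S : P -> P -> Prop) (k : nat) : Prop :=
  exists (vG vH : 'I_k -> P),
    (forall i, S (vG i) (vH i)) /\
    (forall c : 'I_k -> K,
        \sum_(i < k) c i *: vG i = 0 -> \sum_(i < k) c i *: vH i = 0 ->
        forall i, c i = 0) /\
    (forall G H, S G H -> exists c : 'I_k -> K,
        G = \sum_(i < k) c i *: vG i /\ H = \sum_(i < k) c i *: vH i).
End Defs.

From Pilot Require Import Defs.
From HB Require Import structures.
From mathcomp Require Import all_boot all_order all_algebra.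
From mathcomp Require Import mpoly.
From mathcomp Require Import ring zify.
From Stdlib Require Import Classical.
Set Implicit Arguments. Unset Strict Implicit. Unset Printing Implicit Defensive.
Import GRing.Theory Order.TTheory.
Local Open Scope ring_scope.

(* Write E = X G + Y H and eu p = X dX p + Y dY p.  Expanding gives
     f dX E - E dX f = f (G + eu G) - G eu f - Y GRop f G H,
   and symmetrically in Y.  At the sum of the leading monomials, the coefficient of
   f (Q + eu Q) - Q eu f is lc f * lc Q * (deg Q + 1 - deg f), nonzero in characteristic 0
   unless deg Q = d - 1.  So for nu > d, a pair in ker R_nu with a component of degree
   nu - 1 would make the left side too small: ker R_nu = ker G_(nu-1).  For nu = d the
   top-degree parts of f (Q + eu Q) - Q eu f cancel; comparing the weights of X dX and
   Y dY at the leading monomials then shows that when deg E = d, E has the same leading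
   monomial as f.  Subtracting the multiple of the trivial solution (dX f, dY f), whose
   E is eu f with leading coefficient d lc f, that kills this coefficient therefore lands
   in ker R_d, while the trivial solution itself is not in ker R_d:
   ker G_d = ker R_d + K (dX f, dY f). *)

Section FiniteBasis.
Variables (K : fieldType) (V : lmodType K).

Fixpoint in_span (ws : seq V) (v : V) : Prop :=
  if ws is w :: ws' then exists a, in_span ws' (v - a *: w) else v = 0.

Lemma in_span0 ws : in_span ws 0.
Proof. by elim: ws => //= w ws IH; exists 0; rewrite scale0r subr0. Qed.

Lemma in_spanZD ws a u v : in_span ws u -> in_span ws v -> in_span ws (a *: u + v).
Proof.
elim: ws u v => [|w ws IH] u v /=; first by move=> -> ->; rewrite scaler0 addr0.
move=> [b wsu] [c wsv]; exists (a * b + c).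
have -> : a *: u + v - (a * b + c) *: w = a *: (u - b *: w) + (v - c *: w).
  by rewrite scalerBr scalerA scalerDl opprD addrACA.
exact: IH.
Qed.

Lemma in_spanD ws u v : in_span ws u -> in_span ws v -> in_span ws (u + v).
Proof. by move=> wsu wsv; rewrite -[u]scale1r; apply: in_spanZD. Qed.

Lemma in_span_mem ws v : v \in ws -> in_span ws v.
Proof.
elim: ws => [|w ws IH] //=; rewrite inE => /orP [/eqP ->|/IH wsv].
  by exists 1; rewrite scale1r subrr; apply: in_span0.
by exists 0; rewrite scale0r subr0.
Qed.

Lemma in_span_sum ws (I : finType) (F : I -> V) (c : I -> K) :
  (forall i, in_span ws (F i)) -> in_span ws (\sum_i c i *: F i).
Proof. by move=> wsF; elim/big_rec: _ => [|i x _ Hx]; [exact: in_span0 | exact: in_spanZD]. Qed.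

Definition subspace (S : V -> Prop) :=
  S 0 /\ forall a u v, S u -> S v -> S (a *: u + v).

Lemma subspace_sum S k (c : 'I_k -> K) (b : 'I_k -> V) :
  subspace S -> (forall i, S (b i)) -> S (\sum_(i < k) c i *: b i).
Proof. by move=> [S0 SZD] Sb; elim/big_rec: _ => // i x _ Sx; apply: SZD. Qed.

Definition basis_of (S : V -> Prop) k (b : 'I_k -> V) :=
  [/\ forall i, S (b i),
      forall c : 'I_k -> K, \sum_(i < k) c i *: b i = 0 -> forall i, c i = 0
    & forall v, S v -> exists c : 'I_k -> K, v = \sum_(i < k) c i *: b i].

Lemma eq_basis_of (S S' : V -> Prop) k (b : 'I_k -> V) :
  (forall v, S v <-> S' v) -> basis_of S b -> basis_of S' b.
Proof.
move=> SS' [Sb b_free b_span]; split=> // [i|v /SS']; [exact/SS' | exact: b_span].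
Qed.

Definition cons_basis k (b : 'I_k -> V) (v0 : V) (i : 'I_k.+1) : V :=
  if unlift ord0 i is Some j then b j else v0.

Lemma sum_cons_basis k (b : 'I_k -> V) v0 (c : 'I_k.+1 -> K) :
  \sum_(i < k.+1) c i *: cons_basis b v0 i =
  c ord0 *: v0 + \sum_(j < k) c (lift ord0 j) *: b j.
Proof.
rewrite big_ord_recl /cons_basis unlift_none; congr (_ + _).
by apply: eq_bigr => j _; rewrite liftK.
Qed.

Lemma basis_of_cons (S S' : V -> Prop) k (b : 'I_k -> V) v0 :
  subspace S' -> basis_of S' b -> (forall v, S' v -> S v) ->
  S v0 -> ~ S' v0 -> (forall v, S v -> exists a, S' (v - a *: v0)) ->
  basis_of S (cons_basis b v0).
Proof.
move=> S'sub [S'b b_free b_span] S'S Sv0 S'v0 S_dec; split.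
- by move=> i; rewrite /cons_basis; case: unliftP => [j _|_] //; apply: S'S.
- move=> c; rewrite sum_cons_basis => c_eq0.
  have c0 : c ord0 = 0.
    apply: contra_not_eq S'v0 => c0_neq0.
    set s := \sum_(j < k) _ in c_eq0.
    have sE : s = - (c ord0 *: v0) by apply/eqP; rewrite -addr_eq0 addrC c_eq0.
    have -> : v0 = (- (c ord0)^-1) *: s + 0.
      by rewrite addr0 sE scaleNr scalerN opprK scalerA mulVf // scale1r.
    by apply: S'sub.2 S'sub.1; apply: subspace_sum.
  move: c_eq0; rewrite c0 scale0r add0r => /b_free cj0 i.
  by case: (unliftP ord0 i) => [j ->|->].
- move=> v /S_dec [a /b_span [c vE]].
  exists (fun i => if unlift ord0 i is Some j then c j else a).
  rewrite sum_cons_basis unlift_none.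
  under eq_bigr => j _ do rewrite liftK.
  by rewrite -vE addrC subrK.
Qed.

Lemma subspace_basis ws (S : V -> Prop) :
  subspace S -> (forall v, S v -> in_span ws v) ->
  exists k (b : 'I_k -> V), basis_of S b.
Proof.
elim: ws S => [|w ws IH] S [S0 SZD] S_span.
  exists 0%N, (fun _ => 0); split; [by case | by move=> c _; case |].
  by move=> v /S_span /= ->; exists (fun _ => 0); rewrite big_ord0.
pose S' v := S v /\ in_span ws v.
have S'sub : subspace S'.
  split; first by split; [exact: S0 | exact: in_span0].
  by move=> a u v [Su wsu] [Sv wsv]; split; [exact: SZD | exact: in_spanZD].
case: (classic (exists v0, S v0 /\ ~ in_span ws v0)) => [[v0 [Sv0 wsv0]]|]; last first.
  move=> S_ws; apply: IH => // v Sv; apply: NNPP => wsv; apply: S_ws; by exists v.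
have [k [b b_basis]] := IH S' S'sub (fun v (S'v : S' v) => S'v.2).
exists k.+1, (cons_basis b v0); apply: (basis_of_cons S'sub) => //; first by move=> v [].
  by move=> [].
(* [v0] has a nonzero [w]-coordinate, which can be used to clear that of any [v]. *)
have [a0 wsa0] := S_span _ Sv0.
have a0_neq0 : a0 != 0.
  by apply: contra_notN wsv0 => /eqP a00; move: wsa0; rewrite a00 scale0r subr0.
move=> v Sv; have [a wsa] := S_span _ Sv; exists (a / a0); split.
  by rewrite -scaleNr addrC; apply: SZD.
have -> : v - (a / a0) *: v0 = (- (a / a0)) *: (v0 - a0 *: w) + (v - a *: w).
  rewrite scalerBr scaleNr scalerA mulNr scaleNr opprK divfK //.
  by rewrite -addrA [a *: w + _]addrC subrK addrC.
exact: in_spanZD.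
Qed.

End FiniteBasis.

Section DiagonalOperators.
Variables (n : nat) (R : comNzRingType).
Implicit Types (p q : {mpoly R[n]}) (m : 'X_{1..n}).

Lemma mlead_le_of_mcoeff p m0 : (forall m, (m0 < m)%O -> p@_m = 0) -> (mlead p <= m0)%O.
Proof.
move=> p_gt; have [->|p_neq0] := eqVneq p 0; first by rewrite mlead0 le0m.
by rewrite leNgt; apply/negP => /p_gt /eqP; rewrite mleadc_eq0 (negbTE p_neq0).
Qed.

Variables (D : {mpoly R[n]} -> {mpoly R[n]}) (w : 'X_{1..n} -> nat).
Hypothesis mcoeff_D : forall p m, (D p)@_m = p@_m *+ w m.

Lemma mlead_diag p : (mlead (D p) <= mlead p)%O.
Proof.
by apply: mlead_le_of_mcoeff => m /mcoeff_gt_mlead; rewrite mcoeff_D => ->; rewrite mul0rn.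
Qed.

Lemma mleadc_mul_diag p q : (p * D q)@_(mlead p + mlead q) = mleadc p * mleadc q *+ w (mlead q).
Proof. by rewrite mleadcMW ?mlead_diag // mcoeff_D mulrnAr. Qed.

End DiagonalOperators.

Section Euler.
Variables (n : nat) (R : comNzRingType).
Implicit Types (p q : {mpoly R[n]}) (m : 'X_{1..n}).

Lemma mcoeff_X_mderiv i p m : ('X_i * p^`M(i))@_m = p@_m *+ m i.
Proof.
have [m_i0|m_i_gt0] := posnP (m i).
  rewrite m_i0 mulr0n; apply: memN_msupp_eq0; rewrite mulrC.
  rewrite (perm_mem (msuppMX _ _)); apply/negP => /mapP [m' _ mE].
  by move: m_i0; rewrite mE mnmDE mnm1E eqxx.
have mE : m = (U_(i) + (m - U_(i)))%MM.
  by apply/mnmP => j; rewrite mnmDE mnmBE mnm1E; case: (i =P j) => [<-|_] /=; lia.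
rewrite {1}mE mulrC mcoeffMX mcoeff_mderiv addmC -mE mnmBE mnm1E eqxx.
by rewrite subn1 prednK.
Qed.

Definition euler p : {mpoly R[n]} := \sum_i 'X_i * p^`M(i).

Lemma mcoeff_euler p m : (euler p)@_m = p@_m *+ mdeg m.
Proof.
rewrite /euler (raddf_sum (mcoeff m)) mdegE -sumrMnr.
by apply: eq_bigr => i _ /=; rewrite mcoeff_X_mderiv.
Qed.

Lemma mcoeff_addr_euler p m : (p + euler p)@_m = p@_m *+ (mdeg m).+1.
Proof. by rewrite mcoeffD mcoeff_euler mulrS. Qed.

Lemma mcoeff_eq0_msize p m : (msize p <= mdeg m)%N -> p@_m = 0.
Proof. by move=> p_m; apply: memN_msupp_eq0; apply: msize_mdeg_ge. Qed.

Lemma msize_le_of_mcoeff p k : (forall m, (k <= mdeg m)%N -> p@_m = 0) -> (msize p <= k)%N.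
Proof.
move=> p_k; have [->|p_neq0] := eqVneq p 0; first by rewrite msize0.
rewrite -mlead_deg //; apply: contraTT p_neq0; rewrite -ltnNge ltnS => /p_k /eqP.
by rewrite mleadc_eq0 negbK.
Qed.

Lemma mdeg_mlead_msize d p : msize p = d.+1 -> mdeg (mlead p) = d.
Proof.
move=> p_d; have p_neq0 : p != 0 by rewrite -msize_poly_eq0 p_d.
by apply: succn_inj; rewrite mlead_deg.
Qed.

Lemma msize_mderiv i p : (msize p^`M(i) <= (msize p).-1)%N.
Proof.
apply: msize_le_of_mcoeff => m p_m; rewrite mcoeff_mderiv mcoeff_eq0_msize ?mul0rn //.
by rewrite mdegD mdeg1; lia.
Qed.

Lemma msize_euler p : (msize (euler p) <= msize p)%N.
Proof. by apply: msize_le_of_mcoeff => m p_m; rewrite mcoeff_euler mcoeff_eq0_msize ?mul0rn. Qed.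

Lemma msize_mul p q : (msize (p * q) <= (msize p + msize q).-1)%N.
Proof.
have [->|p_neq0] := eqVneq p 0; first by rewrite mul0r msize0.
have [->|q_neq0] := eqVneq q 0; first by rewrite mulr0 msize0.
have [->|pq_neq0] := eqVneq (p * q) 0; first by rewrite msize0.
rewrite -!mlead_deg //; have /lemc_mdeg := mleadM_le p q; rewrite mdegD; lia.
Qed.

Lemma msize_mul_le p q a b : (msize p <= a)%N -> (msize q <= b)%N ->
  (msize (p * q) <= (a + b).-1)%N.
Proof.
by move=> p_a q_b; apply: leq_trans (msize_mul p q) _; rewrite -!subn1 leq_sub2r ?leq_add.
Qed.

Lemma msize_add_le p q k : (msize p <= k)%N -> (msize q <= k)%N -> (msize (p + q) <= k)%N.
Proof. by move=> p_k q_k; apply: leq_trans (msizeD_le _ _) _; rewrite geq_max p_k q_k. Qed.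

Lemma msize_scale_add_le (a : R) p q k : (msize p <= k)%N -> (msize q <= k)%N ->
  (msize (a *: p + q) <= k)%N.
Proof. by move=> p_k q_k; apply: msize_add_le => //; apply: leq_trans (msizeZ_le _ _) p_k. Qed.

Lemma msize_sub_le p q k : (msize p <= k)%N -> (msize q <= k)%N -> (msize (p - q) <= k)%N.
Proof. by move=> p_k q_k; apply: msize_add_le; rewrite ?msizeN. Qed.

(* In degree [a + b], the product [p * euler q] only sees the degree-[b] part of [q]. *)
Lemma mcoeff_mul_euler_top p q a b m : (msize p <= a.+1)%N -> (msize q <= b.+1)%N ->
  mdeg m = (a + b)%N -> (p * euler q)@_m = (p * q)@_m *+ b.
Proof.
move=> p_a q_b m_ab; rewrite !mcoeffM -sumrMnl; apply: eq_bigr => k /eqP mE.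
rewrite mcoeff_euler.
have k_ab : (mdeg k.1 + mdeg k.2 = a + b)%N by rewrite -mdegD -mE m_ab.
case: (ltngtP (mdeg k.2) b) => k2_b.
- have p0 : p@_k.1 = 0 by apply: mcoeff_eq0_msize; apply: leq_trans p_a _; lia.
  by rewrite p0 !mul0r mul0rn.
- have q0 : q@_k.2 = 0 by apply: mcoeff_eq0_msize; apply: leq_trans q_b _.
  by rewrite q0 mul0rn !mulr0 mul0rn.
- by rewrite k2_b mulrnAr.
Qed.

Definition wronskian i f g : {mpoly R[n]} := f * g^`M(i) - g * f^`M(i).

Definition euler_wronskian f g : {mpoly R[n]} := f * (g + euler g) - g * euler f.

Lemma msize_wronskian i f g : (msize (wronskian i f g) <= (msize f + msize g).-2)%N.
Proof.
have [->|f_neq0] := eqVneq f 0; first by rewrite /wronskian mderiv0 mul0r mulr0 subrr msize0.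
have [->|g_neq0] := eqVneq g 0; first by rewrite /wronskian mderiv0 mul0r mulr0 subrr msize0.
have f_gt0 : (0 < msize f)%N by rewrite lt0n msize_poly_eq0.
have g_gt0 : (0 < msize g)%N by rewrite lt0n msize_poly_eq0.
apply: msize_sub_le.
  by apply: leq_trans (msize_mul_le (leqnn _) (msize_mderiv i g)) _; lia.
by apply: leq_trans (msize_mul_le (leqnn _) (msize_mderiv i f)) _; lia.
Qed.

(* In degree [2d - 1] only the homogeneous parts [f_d] and [g_(d-1)] contribute, and
   [f_d * (1 + (d - 1)) g_(d-1) - g_(d-1) * d f_d = 0] by Euler's identity. *)
Lemma msize_euler_wronskian_le d f g : (0 < d)%N -> msize f = d.+1 -> (msize g <= d)%N ->
  (msize (euler_wronskian f g) <= (d + d).-1)%N.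
Proof.
move=> d_gt0 f_d g_d; apply: msize_le_of_mcoeff => m m_ge.
have [m_lt|m_ge2d] := ltnP (mdeg m) (d + d).
  have f_d' : (msize f <= d.+1)%N by rewrite f_d.
  have g_d' : (msize g <= d.-1.+1)%N by rewrite prednK.
  rewrite mcoeffB mulrDr mcoeffD (@mcoeff_mul_euler_top f g d d.-1) //; last by lia.
  rewrite (@mcoeff_mul_euler_top g f d.-1 d) ?(mulrC g) //; last by lia.
  by rewrite -mulrS prednK // subrr.
have fg_small : (msize (f * (g + euler g)) <= mdeg m)%N.
  apply: leq_trans (msize_mul_le (leqnn _) (msize_add_le g_d (leq_trans (msize_euler g) g_d))) _.
  by rewrite f_d; lia.
have gf_small : (msize (g * euler f) <= mdeg m)%N.
  apply: leq_trans (msize_mul_le g_d (msize_euler f)) _.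
  by rewrite f_d; lia.
by rewrite mcoeffB !mcoeff_eq0_msize // subr0.
Qed.

End Euler.

Section CharZero.
Variables (n : nat) (R : idomainType).
Hypothesis char0 : [pchar R] =i pred0.
Implicit Types (f g : {mpoly R[n]}).

Lemma natr_inj_pchar0 a b : a%:R = b%:R :> R -> a = b.
Proof.
have natr_eq0 := (pcharf0P R).1 char0.
wlog ab : a b / (a <= b)%N => [hyp|E].
  have [ab|/ltnW ba] := leqP a b => E; first exact: hyp.
  by apply/esym/hyp.
have : (b - a)%:R == 0 :> R by rewrite natrB // E subrr.
by rewrite natr_eq0 subn_eq0 => ba; apply/eqP; rewrite eqn_leq ab.
Qed.

Lemma mulrnI_pchar0 (x : R) a b : x != 0 -> x *+ a = x *+ b -> a = b.
Proof.
move=> x_neq0; rewrite -mulr_natr -[x *+ b]mulr_natr.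
by move/(mulfI x_neq0)/natr_inj_pchar0.
Qed.

Lemma lead_weights_eq (D1 D2 : {mpoly R[n]} -> {mpoly R[n]})
    (w1 w2 : 'X_{1..n} -> nat) f g :
  (forall p m, (D1 p)@_m = p@_m *+ w1 m) -> (forall p m, (D2 p)@_m = p@_m *+ w2 m) ->
  f != 0 -> g != 0 ->
  (f * D1 g - g * D2 f)@_(mlead f + mlead g) = 0 -> w1 (mlead g) = w2 (mlead f).
Proof.
move=> D1E D2E f_neq0 g_neq0.
rewrite mcoeffB (mleadc_mul_diag D1E) addmC (mleadc_mul_diag D2E) (mulrC (mleadc g)).
move/eqP; rewrite subr_eq0 => /eqP; apply: mulrnI_pchar0.
by rewrite mulf_neq0 ?mleadc_eq0.
Qed.

Lemma mcoeff_euler_mlead_neq0 f : (0 < mdeg (mlead f))%N -> (euler f)@_(mlead f) != 0.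
Proof.
move=> lf_gt0; have f_neq0 : f != 0 by apply: contraTneq lf_gt0 => ->; rewrite mlead0 mdeg0.
by rewrite mcoeff_euler -mulr_natr mulf_neq0 ?mleadc_eq0 // ((pcharf0P R).1 char0) -lt0n.
Qed.

Lemma euler_wronskian_msize f g : f != 0 -> g != 0 ->
  (msize (euler_wronskian f g) <= (msize f + msize g).-2)%N -> msize f = (msize g).+1.
Proof.
move=> f_neq0 g_neq0 ew_small.
have f_deg := mlead_deg f_neq0; have g_deg := mlead_deg g_neq0.
rewrite -f_deg -g_deg; congr _.+1; apply/esym.
apply: (lead_weights_eq (@mcoeff_addr_euler _ _) (@mcoeff_euler _ _) f_neq0 g_neq0).
by apply: mcoeff_eq0_msize; apply: leq_trans ew_small _; rewrite mdegD; lia.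
Qed.

Lemma mlead_wronskian_eq i d f g : (0 < d)%N -> msize f = d.+1 -> msize g = d.+1 ->
  (msize (wronskian i f g) <= (d + d).-1)%N -> mlead g i = mlead f i.
Proof.
move=> d_gt0 f_d g_d wr_small.
have f_neq0 : f != 0 by rewrite -msize_poly_eq0 f_d.
have g_neq0 : g != 0 by rewrite -msize_poly_eq0 g_d.
have XiE := @mcoeff_X_mderiv n R i.
apply: (lead_weights_eq XiE XiE f_neq0 g_neq0).
have -> : f * ('X_i * g^`M(i)) - g * ('X_i * f^`M(i)) = 'X_i * wronskian i f g.
  by rewrite /wronskian; ring.
apply: mcoeff_eq0_msize; rewrite mdegD.
rewrite (mdeg_mlead_msize f_d) (mdeg_mlead_msize g_d).
apply: leq_trans (msize_mul_le (leqnn _) wr_small) _.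
by rewrite msizeX mdeg1; lia.
Qed.

End CharZero.

Section Plane.
Variable K : fieldType.
Hypothesis char0 : [pchar K] =i pred0.
Local Notation P := {mpoly K[2]}.
Implicit Types (f p G H : P).

Lemma ord2_cases (j : 'I_2) : j = varX \/ j = varY.
Proof. by case: j => [[|[|k]] j_lt] //; [left|right]; apply: val_inj. Qed.

Definition xy_comb G H : P := 'X_varX * G + 'X_varY * H.

Lemma euler_xy_comb p : euler p = xy_comb p^`M(varX) p^`M(varY).
Proof.
rewrite /euler big_ord_recl big_ord1.
by have -> : lift ord0 ord0 = varY :> 'I_2 by apply: val_inj.
Qed.

Lemma mderivXi (i j : 'I_2) : ('X_j : P)^`M(i) = (j == i)%:R.
Proof.
rewrite mderivX mnm1E; case: eqP => [->|_]; last by rewrite scale0r.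
have -> : (U_(i) - U_(i) = 0 :> 'X_{1..2})%MM.
  by apply/mnmP => k; rewrite mnmBE mnm0E subnn.
by rewrite mpolyX0 scale1r.
Qed.

Lemma wronskianX_xy_comb f G H :
  wronskian varX f (xy_comb G H) = euler_wronskian f G - 'X_varY * GRop f G H.
Proof.
rewrite /wronskian /euler_wronskian /GRop !euler_xy_comb /xy_comb.
by rewrite mderivD !mderivM !mderivXi /=; ring.
Qed.

Lemma wronskianY_xy_comb f G H :
  wronskian varY f (xy_comb G H) = euler_wronskian f H + 'X_varX * GRop f G H.
Proof.
rewrite /wronskian /euler_wronskian /GRop !euler_xy_comb /xy_comb.
by rewrite mderivD !mderivM !mderivXi /=; ring.
Qed.

Lemma msize_xy_comb G H k : (msize G <= k)%N -> (msize H <= k)%N ->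
  (msize (xy_comb G H) <= k.+1)%N.
Proof.
have msizeXi (i : 'I_2) : msize ('X_i : P) = 2 by rewrite msizeX mdeg1.
move=> G_k H_k; apply: msize_add_le.
  by apply: leq_trans (msize_mul_le (eq_leq (msizeXi varX)) G_k) _; rewrite add2n.
by apply: leq_trans (msize_mul_le (eq_leq (msizeXi varY)) H_k) _; rewrite add2n.
Qed.

Lemma GRop_partials f : GRop f f^`M(varX) f^`M(varY) = 0.
Proof. by rewrite /GRop (mderiv_comm varX varY f); ring. Qed.

Lemma GRopZD f a G1 H1 G2 H2 :
  GRop f (a *: G1 + G2) (a *: H1 + H2) = a *: GRop f G1 H1 + GRop f G2 H2.
Proof. by rewrite /GRop !mderivD !mderivZ -!mul_mpolyC; ring. Qed.

Lemma xy_combZD a G1 H1 G2 H2 :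
  xy_comb (a *: G1 + G2) (a *: H1 + H2) = a *: xy_comb G1 H1 + xy_comb G2 H2.
Proof. by rewrite /xy_comb -!mul_mpolyC; ring. Qed.

Lemma kerR_msize_lt d nu f G H : msize f = d.+1 -> (d < nu)%N -> kerR nu f G H ->
  (msize G < nu)%N /\ (msize H < nu)%N.
Proof.
move=> f_d d_nu [[G_nu [H_nu E_nu]] GR0].
have f_neq0 : f != 0 by rewrite -msize_poly_eq0 f_d.
have E_nu' : (msize (xy_comb G H) <= nu)%N := E_nu.
have msize_lt Q : (msize Q <= nu)%N ->
    (msize (euler_wronskian f Q) <= (msize f + nu).-2)%N -> (msize Q < nu)%N.
  move=> Q_nu ew_small; rewrite ltn_neqAle Q_nu andbT; apply/eqP => Q_eq.
  have Q_neq0 : Q != 0 by rewrite -msize_poly_eq0 Q_eq; lia.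
  have := euler_wronskian_msize char0 f_neq0 Q_neq0.
  by rewrite Q_eq => /(_ ew_small); rewrite f_d; lia.
split; apply: msize_lt => //.
  have := msize_wronskian varX f (xy_comb G H).
  rewrite wronskianX_xy_comb GR0 mulr0 subr0 => /leq_trans; apply.
  by rewrite -!subn2 leq_sub2r // leq_add2l.
have := msize_wronskian varY f (xy_comb G H).
rewrite wronskianY_xy_comb GR0 mulr0 addr0 => /leq_trans; apply.
by rewrite -!subn2 leq_sub2r // leq_add2l.
Qed.

Lemma kerR_iff_kerG d nu f G H : msize f = d.+1 -> (d < nu)%N ->
  kerR nu f G H <-> kerG nu.-1 f G H.
Proof.
move=> f_d d_nu; split => [RGH|[G_nu [H_nu GR0]]].
  have [G_lt H_lt] := kerR_msize_lt f_d d_nu RGH.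
  by split; [|split]; [lia | lia | exact: RGH.2].
split=> //; split; [lia | split; [lia |]].
by apply: leq_trans (msize_xy_comb G_nu H_nu) _; lia.
Qed.

Lemma mlead_xy_comb_kerG d f G H : (0 < d)%N -> msize f = d.+1 -> kerG d f G H ->
  msize (xy_comb G H) = d.+1 -> mlead (xy_comb G H) = mlead f.
Proof.
move=> d_gt0 f_d [G_d [H_d GR0]] E_d; apply/mnmP => j.
apply: (mlead_wronskian_eq char0 d_gt0 f_d E_d).
case: (ord2_cases j) => ->.
  by rewrite wronskianX_xy_comb GR0 mulr0 subr0; apply: msize_euler_wronskian_le.
by rewrite wronskianY_xy_comb GR0 mulr0 addr0; apply: msize_euler_wronskian_le.
Qed.

Lemma kerR_sub_kerG nu f G H : kerR nu f G H -> kerG nu f G H.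
Proof. by move=> [[G_nu [H_nu _]] GR0]; split; [|split]. Qed.

Lemma partials_kerG d f : msize f = d.+1 -> kerG d f f^`M(varX) f^`M(varY).
Proof.
move=> f_d; split; [|split; last exact: GRop_partials];
  by apply: leq_trans (msize_mderiv _ _) _; rewrite f_d.
Qed.

Lemma partials_notin_kerR d f : (0 < d)%N -> msize f = d.+1 ->
  ~ kerR d f f^`M(varX) f^`M(varY).
Proof.
move=> d_gt0 f_d [[_ [_ E_d]] _].
have lf_d := mdeg_mlead_msize f_d.
have ef_small : (msize (euler f) <= mdeg (mlead f))%N by rewrite euler_xy_comb lf_d.
have := @mcoeff_euler_mlead_neq0 _ _ char0 f.
by rewrite lf_d mcoeff_eq0_msize // eqxx => /(_ d_gt0).
Qed.

Lemma kerG_shift_kerR d f G H : (0 < d)%N -> msize f = d.+1 -> kerG d f G H ->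
  exists c, kerR d f (G - c *: f^`M(varX)) (H - c *: f^`M(varY)).
Proof.
move=> d_gt0 f_d GH_ker; have [fX_d [fY_d fGR0]] := partials_kerG f_d.
have [G_d [H_d GR0]] := GH_ker; have lf_d := mdeg_mlead_msize f_d.
have ef_neq0 : (euler f)@_(mlead f) != 0.
  by apply: (mcoeff_euler_mlead_neq0 char0); rewrite lf_d.
(* [c] cancels the coefficient of [mlead f] in [X G' + Y H']. *)
exists ((xy_comb G H)@_(mlead f) / (euler f)@_(mlead f)).
set c := _ / _; rewrite -!scaleNr ![_ + _ *: _]addrC.
set G' := _ + G; set H' := _ + H.
have G'_d : (msize G' <= d)%N by apply: msize_scale_add_le.
have H'_d : (msize H' <= d)%N by apply: msize_scale_add_le.
have GR0' : GRop f G' H' = 0 by rewrite GRopZD fGR0 GR0 scaler0 addr0.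
have E'_lead0 : (xy_comb G' H')@_(mlead f) = 0.
  by rewrite xy_combZD mcoeffD mcoeffZ -euler_xy_comb mulNr divfK // addNr.
split=> //; split=> //; split=> //; rewrite -/(xy_comb G' H').
have [//|E'_gt] := leqP (msize (xy_comb G' H')) d.
have E'_d : msize (xy_comb G' H') = d.+1.
  by apply/eqP; rewrite eqn_leq E'_gt msize_xy_comb.
have : xy_comb G' H' != 0 by rewrite -msize_poly_eq0 E'_d.
have G'H'_ker : kerG d f G' H' by split; [|split].
by rewrite -mleadc_eq0 (mlead_xy_comb_kerG d_gt0 f_d G'H'_ker E'_d) E'_lead0 eqxx.
Qed.

End Plane.

Section KernelDimension.
Variable K : fieldType.
Local Notation P := {mpoly K[2]}.
Local Notation V := (P * P)%type.

Definition kerR_pair nu (f : P) (v : V) : Prop := kerR nu f v.1 v.2.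

Lemma subspace_kerR nu f : subspace (kerR_pair nu f).
Proof.
split.
  rewrite /kerR_pair /kerR /Defs.inE /GRop /= !mderiv0 !mulr0 !mul0r addr0 msize0.
  by split; [|rewrite !subrr addr0].
move=> a [G1 H1] [G2 H2] [[G1_nu [H1_nu E1_nu]] GR1] [[G2_nu [H2_nu E2_nu]] GR2].
split; last by rewrite /= GRopZD GR1 GR2 scaler0 addr0.
have E_nu : (msize (xy_comb (a *: G1 + G2) (a *: H1 + H2)) <= nu)%N.
  by rewrite xy_combZD; apply: msize_scale_add_le.
by split; [|split]; [apply: msize_scale_add_le | apply: msize_scale_add_le | exact: E_nu].
Qed.

Definition monomial_pairs nu : seq V :=
  [seq ('X_[bmnm m], 0) | m <- index_enum 'X_{1..2 < nu}] ++
  [seq (0, 'X_[bmnm m]) | m <- index_enum 'X_{1..2 < nu}].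

Lemma kerR_in_span nu f v : kerR_pair nu f v -> in_span (monomial_pairs nu) v.
Proof.
case: v => [G H] [[/= G_nu [H_nu _]] _].
have -> : (G, H) = \sum_(m : 'X_{1..2 < nu}) G@_m *: ('X_[bmnm m], 0)
                   + \sum_(m : 'X_{1..2 < nu}) H@_m *: (0, 'X_[bmnm m]) :> V.
  have sum0 (c : 'X_{1..2 < nu} -> K) : \sum_m c m *: (0 : P) = 0.
    by apply: big1 => m _; exact: scaler0.
  apply/eqP; rewrite xpair_eqE !raddf_sum /= !sum0 addr0 add0r.
  by rewrite -!mpolywE // !eqxx.
apply: in_spanD; apply: in_span_sum => m; apply: in_span_mem.
  by rewrite mem_cat map_f ?mem_index_enum.
by rewrite mem_cat orbC map_f ?mem_index_enum.
Qed.

Lemma kerR_basis nu f : exists k (b : 'I_k -> V), basis_of (kerR_pair nu f) b.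
Proof. exact: subspace_basis (subspace_kerR nu f) (@kerR_in_span nu f). Qed.

Lemma has_dim_basis (S : P -> P -> Prop) k (b : 'I_k -> V) :
  basis_of (fun v : V => S v.1 v.2) b -> has_dim S k.
Proof.
move=> [Sb b_free b_span]; exists (fun i => (b i).1), (fun i => (b i).2).
split=> //; split=> [c c1 c2|G H /(b_span (G, H)) [c cE]].
  by apply: b_free; apply/pair_eqP; rewrite /pair_eq !raddf_sum /= c1 c2 eqxx.
by exists c; split; [move/(congr1 fst): cE | move/(congr1 snd): cE]; rewrite raddf_sum.
Qed.

End KernelDimension.

Theorem proposition1p5 (K : closedFieldType) (f : {mpoly K[2]}) (d : nat) :
  [pchar K] =i pred0 ->
  (1 <= d)%N -> msize f = d.+1 ->
  (exists a b : nat,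
      has_dim (kerR d f) a /\ has_dim (kerG d f) b /\ a = (b - 1)%N) /\
  (forall nu : nat, (d < nu)%N ->
    exists a b : nat,
      has_dim (kerR nu f) a /\ has_dim (kerG nu.-1 f) b /\ a = b).
Proof.
move=> char0 d_gt0 f_d; split.
  have [k [b b_basis]] := kerR_basis d f.
  exists k, k.+1; split; first exact: has_dim_basis b_basis.
  split; last by rewrite subn1.
  apply: has_dim_basis (cons_basis b (f^`M(varX), f^`M(varY))) _.
  apply: basis_of_cons (subspace_kerR d f) b_basis _ _ _ _.
  - by move=> v /kerR_sub_kerG.
  - exact: partials_kerG.
  - exact: partials_notin_kerR.
  - by move=> [G H] /(kerG_shift_kerR char0 d_gt0 f_d).
move=> nu d_nu; have [k [b b_basis]] := kerR_basis nu f.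
exists k, k; split; first exact: has_dim_basis b_basis.
split=> //; apply: has_dim_basis; apply: eq_basis_of b_basis => v.
exact: kerR_iff_kerG f_d d_nu.
Qed.
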